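(* Let $B$ be an admissible Banach sequence space, $X$ a Banach space, $\|\cdot\|_m$ ($m\in\mathbb Z$) norms on $X$ each equivalent to the norm of $X$, and $(A_m)_{m\in\mathbb Z}$ a sequence of bounded linear operators on $X$. If the operator $T_B\colon\mathcal D(T_B)\to Y_B$ is bijective, then $(A_m)_{m\in\mathbb Z}$ admits an exponential dichotomy with respect to the sequence of norms $\|\cdot\|_m$.
   Context: Banach sequence spaces: let $\mathcal S$ be the set of real sequences $(s_n)_{n\in\mathbb Z}$. A linear subspace $B\subset\mathcal S$ with norm $\|\cdot\|_B$ is a normed sequence space if $\mathbf{s}'\in B$ and $|s_n|\le|s'_n|$ for all $n$ imply $\mathbf{s}\in B$ and $\|\mathbf{s}\|_B\le\|\mathbf{s}'\|_B$; it is a Banach sequence space if complete. It is admissible if (i) $\chi_{\{n\}}\in B$ and $\|\chi_{\{n\}}\|_B>0$ for all $n\in\mathbb Z$; (ii) for all $\mathbf{s}\in B$, $m\in\mathbb Z$ the shift $(s_{n+m})_n$ is in $B$ with norm at most $N\|\mathbf{s}\|_B$ for a fixed $N>0$. $Y_B$ is the space of sequences $\mathbf{x}=(x_n)_{n\in\mathbb Z}$ in $X$ with $(\|x_n\|_n)_n\in B$, normed by $\|\mathbf{x}\|_{Y_B}=\|(\|x_n\|_n)_n\|_B$. $T_B$ is defined by $(T_B\mathbf{x})_n=x_n-A_{n-1}x_{n-1}$ on the domain $\mathcal D(T_B)=\{\mathbf{x}\in Y_B: T_B\mathbf{x}\in Y_B\}$. Set $\mathcal A(n,m)=A_{n-1}\cdots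 A_m$ for $n>m$ and $\mathcal A(m,m)=\mathrm{Id}$. The sequence $(A_m)$ admits an exponential dichotomy with respect to the norms $\|\cdot\|_m$ if: (1) there are projections $P_m\colon X\to X$ with $A_mP_m=P_{m+1}A_m$ for all $m$, such that each $A_m|_{\ker P_m}\colon\ker P_m\to\ker P_{m+1}$ is invertible; (2) there are constants $D>0$ and $0<\lambda<1<\mu$ such that for all $x\in X$, $\|\mathcal A(n,m)P_mx\|_n\le D\lambda^{n-m}\|x\|_m$ for $n\ge m$, and $\|\mathcal A(n,m)Q_mx\|_n\le D\mu^{n-m}\|x\|_m$ for $n\le m$, where $Q_m=\mathrm{Id}-P_m$ and, for $n<m$, $\mathcal A(n,m)=(\mathcal A(m,n)|_{\ker P_n})^{-1}\colon\ker P_m\to\ker P_n$. *)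

From Stdlib Require Import Reals ZArith.
Open Scope R_scope.

Definition is_norm {V : Type} (zero : V) (add : V -> V -> V) (scal : R -> V -> V)
  (f : V -> R) : Prop :=
  (forall x, 0 <= f x) /\
  (forall x, f x = 0 -> x = zero) /\
  (forall a x, f (scal a x) = Rabs a * f x) /\
  (forall x y, f (add x y) <= f x + f y).

Record NormedSpace := mkNormedSpace {
  car :> Type;
  zero : car;
  add : car -> car -> car;
  opp : car -> car;
  scal : R -> car -> car;
  norm : car -> R;
  add_assoc : forall x y z, add x (add y z) = add (add x y) z;
  add_comm : forall x y, add x y = add y x;
  add_0_l : forall x, add zero x = x;
  add_opp_r : forall x, add x (opp x) = zero;
  scal_assoc : forall a b x, scal a (scal b x) = scal (a * b) x;
  scal_1 : forall x, scal 1 x = x;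
  scal_distr_l : forall a x y, scal a (add x y) = add (scal a x) (scal a y);
  scal_distr_r : forall a b x, scal (a + b) x = add (scal a x) (scal b x);
  norm_ax : is_norm zero add scal norm
}.

Arguments zero {_}.
Arguments add {_}.
Arguments opp {_}.
Arguments scal {_}.
Arguments norm {_}.

Definition sub {X : NormedSpace} (x y : X) : X := add x (opp y).

Definition complete (X : NormedSpace) : Prop :=
  forall u : nat -> X,
    (forall eps, 0 < eps -> exists N : nat, forall i j : nat,
        (N <= i)%nat -> (N <= j)%nat -> norm (sub (u i) (u j)) < eps) ->
    exists l : X, forall eps, 0 < eps -> exists N : nat, forall i : nat,
        (N <= i)%nat -> norm (sub (u i) l) < eps.

Definition is_norm_on (X : NormedSpace) (f : X -> R) : Prop :=
  is_norm (@zero X) add scal f.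

Definition equiv_norm (X : NormedSpace) (f : X -> R) : Prop :=
  exists c C : R, 0 < c /\ 0 < C /\
    forall x : X, c * norm x <= f x /\ f x <= C * norm x.

Definition is_linear (X : NormedSpace) (L : X -> X) : Prop :=
  (forall x y, L (add x y) = add (L x) (L y)) /\
  (forall a x, L (scal a x) = scal a (L x)).

Definition bounded_linear (X : NormedSpace) (L : X -> X) : Prop :=
  is_linear X L /\ exists C : R, forall x, norm (L x) <= C * norm x.

Definition seqR := Z -> R.

Definition is_banach_seq_space (B : seqR -> Prop) (nB : seqR -> R) : Prop :=
  B (fun _ => 0) /\
  (forall s t, B s -> B t -> B (fun n => s n + t n)) /\
  (forall a s, B s -> B (fun n => a * s n)) /\
  (forall s, B s -> 0 <= nB s) /\
  (forall s, B s -> nB s = 0 -> forall n, s n = 0) /\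
  (forall a s, B s -> nB (fun n => a * s n) = Rabs a * nB s) /\
  (forall s t, B s -> B t -> nB (fun n => s n + t n) <= nB s + nB t) /\
  (forall s s', B s' -> (forall n, Rabs (s n) <= Rabs (s' n)) -> B s /\ nB s <= nB s') /\
  (forall u : nat -> seqR, (forall k, B (u k)) ->
    (forall eps, 0 < eps -> exists N : nat, forall i j : nat,
        (N <= i)%nat -> (N <= j)%nat -> nB (fun n => u i n - u j n) < eps) ->
    exists l : seqR, B l /\ forall eps, 0 < eps -> exists N : nat, forall i : nat,
        (N <= i)%nat -> nB (fun n => u i n - l n) < eps).

Definition chi (m : Z) : seqR := fun n => if Z.eq_dec n m then 1 else 0.

Definition admissible (B : seqR -> Prop) (nB : seqR -> R) : Prop :=
  (forall n, B (chi n) /\ 0 < nB (chi n)) /\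
  exists N : R, 0 < N /\ forall s m, B s ->
    B (fun n => s (n + m)%Z) /\ nB (fun n => s (n + m)%Z) <= N * nB s.

Definition inY (X : NormedSpace) (nrm : Z -> X -> R) (B : seqR -> Prop)
  (x : Z -> X) : Prop := B (fun n => nrm n (x n)).

Definition YB_norm (X : NormedSpace) (nrm : Z -> X -> R) (nB : seqR -> R)
  (x : Z -> X) : R := nB (fun n => nrm n (x n)).

Definition TB (X : NormedSpace) (A : Z -> X -> X) (x : Z -> X) : Z -> X :=
  fun n => sub (x n) (A (n - 1)%Z (x (n - 1)%Z)).

Definition inDTB (X : NormedSpace) (A : Z -> X -> X) (nrm : Z -> X -> R)
  (B : seqR -> Prop) (x : Z -> X) : Prop :=
  inY X nrm B x /\ inY X nrm B (TB X A x).

Definition TB_bijective (X : NormedSpace) (A : Z -> X -> X) (nrm : Z -> X -> R)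
  (B : seqR -> Prop) : Prop :=
  (forall x1 x2, inDTB X A nrm B x1 -> inDTB X A nrm B x2 ->
     (forall n, TB X A x1 n = TB X A x2 n) -> forall n, x1 n = x2 n) /\
  (forall y, inY X nrm B y ->
     exists x, inDTB X A nrm B x /\ forall n, TB X A x n = y n).

Fixpoint evol {X : NormedSpace} (A : Z -> X -> X) (m : Z) (k : nat) (x : X) : X :=
  match k with
  | O => x
  | S k' => A (m + Z.of_nat k')%Z (evol A m k' x)
  end.

(* Acal A n m = A_{n-1} ... A_m  for n >= m, Acal A m m = Id *)
Definition Acal {X : NormedSpace} (A : Z -> X -> X) (n m : Z) : X -> X :=
  evol A m (Z.to_nat (n - m)).

Definition exp_dichotomy (X : NormedSpace) (A : Z -> X -> X) (nrm : Z -> X -> R) : Prop :=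
  exists P : Z -> X -> X,
    (forall m, is_linear X (P m)) /\
    (forall m x, P m (P m x) = P m x) /\
    (forall m x, A m (P m x) = P (m + 1)%Z (A m x)) /\
    (forall m, (forall x y, P m x = zero -> P m y = zero -> A m x = A m y -> x = y) /\
               (forall y, P (m + 1)%Z y = zero -> exists x, P m x = zero /\ A m x = y)) /\
    exists D lam mu : R, 0 < D /\ 0 < lam /\ lam < 1 /\ 1 < mu /\
      (forall n m (x : X), (m <= n)%Z ->
         nrm n (Acal A n m (P m x)) <= D * powerRZ lam (n - m) * nrm m x) /\
      (* for n <= m: Acal(n,m) Q_m x is the unique y in ker P_n with
         Acal(m,n) y = Q_m x *)
      (forall n m (x y : X), (n <= m)%Z -> P n y = zero ->
         Acal A m n y = sub x (P m x) ->
         nrm n y <= D * powerRZ mu (n - m) * nrm m x).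

(* Since T_B is a bijection from its domain onto the Banach space Y_B with closed graph, a
   Baire category argument shows that T_B^-1 is bounded, say by K.  The projection P_m v is
   the value at m of G_m v := T_B^-1 (v at time m), the unique bounded solution of
   x_n = A_(n-1) x_(n-1) + [n = m] v.  Multiplying G_m v by a ramp w of slope one changes
   T_B (w G_m v) only into a sequence dominated by G_m v, so boundedness of T_B^-1 yields
   |n - m| |(G_m v)_n|_n <= M |v|_m.  Hence norms halve after L >= 4 M steps, forwards on
   the range of P and backwards on its kernel, which gives the dichotomy with rate
   1 - 1/(2L). *)

From Stdlib Require Import Reals ZArith Lra Lia FunctionalExtensionality Classical ClassicalEpsilon.
Open Scope R_scope.

Section VectorAlgebra.
Context {X : NormedSpace}.
Implicit Types x y z u v : X.

Lemma add_0_r x : add x zero = x.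
Proof. rewrite add_comm; apply add_0_l. Qed.

Lemma add_opp_l x : add (opp x) x = zero.
Proof. rewrite add_comm; apply add_opp_r. Qed.

Lemma add_reg_l x y z : add x y = add x z -> y = z.
Proof.
  intros H. rewrite <- (add_0_l _ y), <- (add_0_l _ z), <- (add_opp_l x), <- !add_assoc, H.
  reflexivity.
Qed.

Lemma opp_unique x y : add x y = zero -> y = opp x.
Proof. intros H. apply (add_reg_l x). rewrite H, add_opp_r. reflexivity. Qed.

Lemma opp_opp x : opp (opp x) = x.
Proof. symmetry. apply opp_unique, add_opp_l. Qed.

Lemma opp_zero : opp (@zero X) = zero.
Proof. symmetry. apply opp_unique, add_0_l. Qed.

Lemma add_add_swap x y z v : add (add x y) (add z v) = add (add x z) (add y v).
Proof. rewrite <- !add_assoc. f_equal. rewrite !add_assoc. f_equal. apply add_comm. Qed.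

Lemma opp_add x y : opp (add x y) = add (opp x) (opp y).
Proof. symmetry. apply opp_unique. rewrite add_add_swap, !add_opp_r, add_0_l. reflexivity. Qed.

Lemma scal_0_l x : scal 0 x = zero.
Proof.
  apply (add_reg_l (scal 0 x)). rewrite <- scal_distr_r, Rplus_0_l, add_0_r. reflexivity.
Qed.

Lemma scal_0_r a : scal a (@zero X) = zero.
Proof.
  apply (add_reg_l (scal a zero)). rewrite <- scal_distr_l, !add_0_r. reflexivity.
Qed.

Lemma scal_m1 x : scal (-1) x = opp x.
Proof.
  apply opp_unique. rewrite <- (scal_1 _ x) at 1. rewrite <- scal_distr_r.
  replace (1 + -1) with 0 by ring. apply scal_0_l.
Qed.

Lemma scal_opp a x : scal a (opp x) = opp (scal a x).
Proof. rewrite <- !scal_m1, !scal_assoc. f_equal. ring. Qed.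

Lemma scal_opp_l a x : scal (- a) x = opp (scal a x).
Proof. rewrite <- !scal_m1, !scal_assoc. f_equal. ring. Qed.

Lemma sub_self x : sub x x = zero.
Proof. apply add_opp_r. Qed.

Lemma sub_eq0 x y : sub x y = zero -> x = y.
Proof.
  unfold sub. intros H. apply opp_unique in H. rewrite <- (opp_opp x), <- H, opp_opp. reflexivity.
Qed.

Lemma sub_0_r x : sub x zero = x.
Proof. unfold sub. rewrite opp_zero. apply add_0_r. Qed.

Lemma sub_0_l x : sub zero x = opp x.
Proof. apply add_0_l. Qed.

Lemma opp_sub x y : opp (sub x y) = sub y x.
Proof. unfold sub. rewrite opp_add, opp_opp, add_comm. reflexivity. Qed.

Lemma sub_add_add x y z v : sub (add x y) (add z v) = add (sub x z) (sub y v).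
Proof. unfold sub. rewrite opp_add. apply add_add_swap. Qed.

Lemma sub_sub_sub x y z v : sub (sub x y) (sub z v) = sub (sub x z) (sub y v).
Proof. unfold sub. rewrite !opp_add. apply add_add_swap. Qed.

Lemma scal_sub a x y : scal a (sub x y) = sub (scal a x) (scal a y).
Proof. unfold sub. rewrite scal_distr_l, scal_opp. reflexivity. Qed.

Lemma sub_scal a b x : sub (scal a x) (scal b x) = scal (a - b) x.
Proof. unfold sub. rewrite <- scal_opp_l, <- scal_distr_r. reflexivity. Qed.

Lemma sub_add_cancel x y : add (sub x y) y = x.
Proof. unfold sub. rewrite <- add_assoc, add_opp_l, add_0_r. reflexivity. Qed.

Lemma add_sub_cancel x y : sub (add x y) y = x.
Proof. unfold sub. rewrite <- add_assoc, add_opp_r, add_0_r. reflexivity. Qed.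

Lemma add_sub_cancel_l x y : sub (add x y) x = y.
Proof. rewrite add_comm. apply add_sub_cancel. Qed.

Lemma sub_add_sub x y z : add (sub x y) (sub y z) = sub x z.
Proof.
  unfold sub. rewrite <- add_assoc, (add_assoc _ (opp y)), add_opp_l, add_0_l. reflexivity.
Qed.

Lemma sub_sub_cancel x y : sub x (sub x y) = y.
Proof. unfold sub. rewrite opp_add, opp_opp, add_assoc, add_opp_r, add_0_l. reflexivity. Qed.

Lemma sub_sub_cancel_l x y : sub (sub x y) x = opp y.
Proof.
  unfold sub. rewrite (add_comm _ x (opp y)), <- add_assoc, add_opp_r, add_0_r. reflexivity.
Qed.

Lemma sub_sub_r x y z : sub x (sub y z) = sub (add z x) y.
Proof.
  unfold sub. rewrite opp_add, opp_opp, (add_comm _ (opp y) z), add_assoc, (add_comm _ x z).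
  reflexivity.
Qed.

Lemma sub_scal_inv a x y z : a <> 0 ->
  sub x (scal (/ a) (sub y z)) = scal (/ a) (sub (add z (scal a x)) y).
Proof.
  intros Ha. rewrite !scal_sub, scal_distr_l, scal_assoc, Rinv_l, scal_1 by exact Ha.
  apply sub_sub_r.
Qed.

End VectorAlgebra.

Section NormFacts.
Context {X : NormedSpace} (f : X -> R).
Hypothesis Hf : is_norm zero add scal f.

Lemma norm_ge0 x : 0 <= f x. Proof. apply Hf. Qed.
Lemma norm_scal a x : f (scal a x) = Rabs a * f x. Proof. apply Hf. Qed.
Lemma norm_add_le x y : f (add x y) <= f x + f y. Proof. apply Hf. Qed.
Lemma norm_eq0 x : f x = 0 -> x = zero. Proof. apply Hf. Qed.

Lemma norm_zero : f zero = 0.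
Proof. rewrite <- (scal_0_l zero), norm_scal, Rabs_R0. ring. Qed.

Lemma norm_opp x : f (opp x) = f x.
Proof. rewrite <- scal_m1, norm_scal, Rabs_left by lra. ring. Qed.

Lemma norm_sub_le x y : f (sub x y) <= f x + f y.
Proof. rewrite <- (norm_opp y). apply norm_add_le. Qed.

Lemma norm_sub_sym x y : f (sub x y) = f (sub y x).
Proof. rewrite <- opp_sub. apply norm_opp. Qed.

Lemma norm_sub_triangle x y z : f (sub x z) <= f (sub x y) + f (sub y z).
Proof. rewrite <- (sub_add_sub x y z). apply norm_add_le. Qed.

End NormFacts.

Section LinearFacts.
Context {X : NormedSpace} (L : X -> X).
Hypothesis HL : is_linear X L.

Lemma linear_add x y : L (add x y) = add (L x) (L y). Proof. apply HL. Qed.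
Lemma linear_scal a x : L (scal a x) = scal a (L x). Proof. apply HL. Qed.

Lemma linear_zero : L zero = zero.
Proof. rewrite <- (scal_0_l zero) at 1. rewrite linear_scal, scal_0_l. reflexivity. Qed.

Lemma linear_opp x : L (opp x) = opp (L x).
Proof. rewrite <- !scal_m1. apply linear_scal. Qed.

Lemma linear_sub x y : L (sub x y) = sub (L x) (L y).
Proof. unfold sub. rewrite linear_add, linear_opp. reflexivity. Qed.

End LinearFacts.

Section SequenceSpace.
Variables (B : seqR -> Prop) (nB : seqR -> R).
Hypothesis HB : is_banach_seq_space B nB.
Hypothesis Hadm : admissible B nB.

Lemma B_zero : B (fun _ => 0). Proof. apply HB. Qed.
Lemma B_add s t : B s -> B t -> B (fun n => s n + t n). Proof. apply HB. Qed.
Lemma B_scal a s : B s -> B (fun n => a * s n). Proof. apply HB. Qed.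
Lemma nB_ge0 s : B s -> 0 <= nB s. Proof. apply HB. Qed.
Lemma nB_eq0 s : B s -> nB s = 0 -> forall n, s n = 0. Proof. apply HB. Qed.
Lemma nB_scal a s : B s -> nB (fun n => a * s n) = Rabs a * nB s. Proof. apply HB. Qed.
Lemma nB_add_le s t : B s -> B t -> nB (fun n => s n + t n) <= nB s + nB t. Proof. apply HB. Qed.

Lemma B_solid s s' :
  B s' -> (forall n, Rabs (s n) <= Rabs (s' n)) -> B s /\ nB s <= nB s'.
Proof. apply HB. Qed.

Lemma B_complete (u : nat -> seqR) : (forall k, B (u k)) ->
  (forall eps, 0 < eps -> exists N : nat, forall i j : nat,
     (N <= i)%nat -> (N <= j)%nat -> nB (fun n => u i n - u j n) < eps) ->
  exists l : seqR, B l /\ forall eps, 0 < eps -> exists N : nat, forall i : nat,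
     (N <= i)%nat -> nB (fun n => u i n - l n) < eps.
Proof. apply HB. Qed.

Lemma B_chi n : B (chi n). Proof. apply Hadm. Qed.

Definition chi_norm n := nB (chi n).

Lemma chi_norm_pos n : 0 < chi_norm n. Proof. apply Hadm. Qed.

Lemma nB_coord_le s n : B s -> Rabs (s n) * chi_norm n <= nB s.
Proof.
  intros Hs.
  destruct (B_solid (fun k => s n * chi n k) s Hs) as [_ H].
  { intros k. unfold chi. destruct (Z.eq_dec k n) as [->|]; [rewrite Rmult_1_r; lra|].
    rewrite Rmult_0_r, Rabs_R0. apply Rabs_pos. }
  rewrite nB_scal in H by apply B_chi. exact H.
Qed.

(* Shifting [chi n] by [n - m] gives [chi m]. *)
Lemma chi_norm_ratio : exists N, 1 <= N /\ forall m n, chi_norm m <= N * chi_norm n.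
Proof.
  destruct Hadm as [_ [N [HN Hshift]]].
  exists (Rmax N 1). split; [apply Rmax_r|]. intros m n.
  destruct (Hshift (chi n) (n - m)%Z (B_chi n)) as [_ H].
  replace (fun k => chi n (k + (n - m))%Z) with (chi m) in H.
  2:{ apply functional_extensionality. intros k. unfold chi.
      destruct (Z.eq_dec k m), (Z.eq_dec (k + (n - m)) n); auto; lia. }
  pose proof (chi_norm_pos n). unfold chi_norm in *.
  eapply Rle_trans; [apply H|]. apply Rmult_le_compat_r; [lra | apply Rmax_l].
Qed.

Lemma nB_zero : nB (fun _ => 0) = 0.
Proof.
  pose proof (nB_scal 0 (chi 0) (B_chi 0)) as H. rewrite Rabs_R0, Rmult_0_l in H.
  replace (fun _ : Z => 0) with (fun n => 0 * chi 0 n); [exact H|].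
  apply functional_extensionality; intros; ring.
Qed.

Lemma B_sub s t : B s -> B t -> B (fun n => s n - t n).
Proof.
  intros Hs Ht. replace (fun n => s n - t n) with (fun n => s n + (-1) * t n).
  - apply B_add, B_scal; assumption.
  - apply functional_extensionality; intros; ring.
Qed.

Lemma nB_sub_sym s t : B s -> B t -> nB (fun n => s n - t n) = nB (fun n => t n - s n).
Proof.
  intros Hs Ht. pose proof (nB_scal (-1) _ (B_sub t s Ht Hs)) as H.
  replace (Rabs (-1)) with 1 in H by (rewrite Rabs_left by lra; lra).
  rewrite Rmult_1_l in H. rewrite <- H. f_equal.
  apply functional_extensionality; intros; ring.
Qed.

Lemma nB_sub_triangle s t u : B s -> B t -> B u ->
  nB (fun n => s n - u n) <= nB (fun n => s n - t n) + nB (fun n => t n - u n).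
Proof.
  intros Hs Ht Hu. replace (fun n => s n - u n) with (fun n => (s n - t n) + (t n - u n)).
  - apply nB_add_le; apply B_sub; assumption.
  - apply functional_extensionality; intros; ring.
Qed.

Fixpoint partial_sum (s : nat -> seqR) (j : nat) : seqR :=
  match j with
  | O => fun _ => 0
  | S j => fun n => partial_sum s j n + s j n
  end.

Section Series.
Variables (s : nat -> seqR) (t : nat -> R).
Hypothesis Hs : forall i, B (s i).
Hypothesis Hs_nonneg : forall i n, 0 <= s i n.
Hypothesis Hs_tail : forall i, nB (s i) <= t i - t (S i).
Hypothesis Ht_nonneg : forall i, 0 <= t i.
Hypothesis Ht_small : forall eps, 0 < eps -> exists i, t i < eps.

Lemma partial_sum_B j : B (partial_sum s j).
Proof. induction j; [apply B_zero | apply B_add; auto]. Qed.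

Lemma tail_bound_decreasing : Un_decreasing t.
Proof.
  intros i. pose proof (Hs_tail i). pose proof (nB_ge0 _ (Hs i)). lra.
Qed.

Lemma partial_sum_nondecreasing n i j : (i <= j)%nat -> partial_sum s i n <= partial_sum s j n.
Proof.
  induction 1 as [|j _ IH]; [lra|]. simpl. pose proof (Hs_nonneg j n). lra.
Qed.

Lemma partial_sum_increment k j :
  nB (fun n => partial_sum s (k + j) n - partial_sum s k n) <= t k - t (k + j)%nat.
Proof.
  induction j as [|j IH].
  - rewrite Nat.add_0_r. replace (fun n => _ - _) with (fun _ : Z => 0).
    + rewrite nB_zero. lra.
    + apply functional_extensionality; intros; ring.
  - rewrite Nat.add_succ_r.
    replace (fun n => partial_sum s (S (k + j)) n - partial_sum s k n)
      with (fun n => (partial_sum s (k + j) n - partial_sum s k n) + s (k + j)%nat n)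
      by (apply functional_extensionality; intros; simpl; ring).
    eapply Rle_trans; [apply nB_add_le; [apply B_sub; apply partial_sum_B | apply Hs]|].
    pose proof (Hs_tail (k + j)%nat). lra.
Qed.

Lemma partial_sum_cauchy k i j : (k <= i)%nat -> (k <= j)%nat ->
  nB (fun n => partial_sum s i n - partial_sum s j n) <= t k.
Proof.
  intros Hi Hj. pose proof (decreasing_prop _ _ _ tail_bound_decreasing Hi).
  pose proof (decreasing_prop _ _ _ tail_bound_decreasing Hj).
  destruct (Nat.le_ge_cases j i).
  - replace i with (j + (i - j))%nat by lia.
    pose proof (partial_sum_increment j (i - j)). pose proof (Ht_nonneg (j + (i - j))%nat). lra.
  - rewrite nB_sub_sym by apply partial_sum_B. replace j with (i + (j - i))%nat by lia.
    pose proof (partial_sum_increment i (j - i)). pose proof (Ht_nonneg (i + (j - i))%nat). lra.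
Qed.

Lemma B_series_limit : exists lim, B lim /\
  (forall k, nB (fun n => lim n - partial_sum s k n) <= t k) /\
  (forall k n, partial_sum s k n <= lim n).
Proof.
  destruct (B_complete (partial_sum s)) as [lim [Hlim_B Hlim]]; [apply partial_sum_B | |].
  { intros eps Heps. destruct (Ht_small eps Heps) as [N HN]. exists N. intros i j Hi Hj.
    pose proof (partial_sum_cauchy N i j Hi Hj). lra. }
  exists lim. split; [exact Hlim_B|]. split.
  - intros k. apply Rle_plus_epsilon. intros eps Heps. destruct (Hlim eps Heps) as [N HN].
    eapply Rle_trans;
      [apply (nB_sub_triangle _ (partial_sum s (k + N))); auto using partial_sum_B|].
    rewrite (nB_sub_sym lim) by auto using partial_sum_B.
    pose proof (HN (k + N)%nat ltac:(lia)). pose proof (partial_sum_increment k N).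
    pose proof (Ht_nonneg (k + N)%nat). lra.
  - intros k n. apply Rle_plus_epsilon. intros eps Heps. pose proof (chi_norm_pos n).
    destruct (Hlim (eps * chi_norm n)) as [N HN]; [nra|].
    pose proof (HN (k + N)%nat ltac:(lia)) as H1.
    pose proof (nB_coord_le _ n (B_sub _ _ (partial_sum_B (k + N)) Hlim_B)) as H2. simpl in H2.
    pose proof (partial_sum_nondecreasing n k (k + N) ltac:(lia)).
    assert (Hclose : Rabs (partial_sum s (k + N) n - lim n) < eps)
      by (apply (Rmult_lt_reg_r (chi_norm n)); lra).
    apply Rabs_def2 in Hclose. lra.
Qed.

End Series.
End SequenceSpace.

Lemma bernoulli_le a n : 0 <= a <= 1 -> 1 - INR n * a <= (1 - a) ^ n.
Proof.
  intros Ha. induction n as [|n IH]; [simpl; lra|].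
  rewrite S_INR. simpl. pose proof (pos_INR n).
  assert ((1 - a) * (1 - INR n * a) <= (1 - a) * (1 - a) ^ n) by (apply Rmult_le_compat_l; lra).
  nra.
Qed.

Lemma pow_le_antitone x a b : 0 <= x <= 1 -> (a <= b)%nat -> x ^ b <= x ^ a.
Proof.
  intros Hx Hab. replace b with (a + (b - a))%nat by lia. rewrite pow_add.
  assert (x ^ (b - a) <= 1) by (rewrite <- (pow1 (b - a)); apply pow_incr; lra).
  pose proof (pow_le x a ltac:(lra)). nra.
Qed.

Lemma half_pow_small b eps : 0 < eps -> exists p, b * (1/2) ^ p < eps.
Proof.
  intros Heps. pose proof (Rabs_pos b). pose proof (Rle_abs b).
  destruct (pow_lt_1_zero (1/2) ltac:(rewrite Rabs_pos_eq; lra) (eps / (Rabs b + 1)))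
    as [N HN]; [apply Rdiv_lt_0_compat; lra|].
  exists N. specialize (HN N (le_n N)). rewrite Rabs_pos_eq in HN by (apply pow_le; lra).
  pose proof (pow_le (1/2) N ltac:(lra)).
  apply (Rmult_lt_compat_l (Rabs b + 1)) in HN; [|lra].
  replace ((Rabs b + 1) * (eps / (Rabs b + 1))) with eps in HN by (field; lra). nra.
Qed.

Section DecayRate.
Variable L : nat.
Hypothesis HL : (0 < L)%nat.

Definition rate := 1 - / (2 * INR L).

Lemma rate_bounds : / 2 <= rate /\ rate < 1.
Proof.
  assert (1 <= INR L) by (apply (le_INR 1); lia).
  assert (/ (2 * INR L) <= / 2) by (apply Rinv_le_contravar; lra).
  assert (0 < / (2 * INR L)) by (apply Rinv_0_lt_compat; lra).
  unfold rate. lra.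
Qed.

(* Bernoulli's inequality: [rate ^ L >= 1 - L / (2 L) = 1/2]. *)
Lemma rate_pow_L : / 2 <= rate ^ L.
Proof.
  assert (1 <= INR L) by (apply (le_INR 1); lia).
  pose proof rate_bounds. eapply Rle_trans; [|apply bernoulli_le].
  - field_simplify; lra.
  - unfold rate in *. lra.
Qed.

Lemma half_pow_le_rate k j : (k <= S j * L)%nat -> (1/2) ^ j <= 2 * rate ^ k.
Proof.
  intros H. pose proof rate_bounds as Hr.
  assert (Hk : rate ^ (S j * L) <= rate ^ k) by (apply pow_le_antitone; auto; lra).
  rewrite Nat.mul_comm, pow_mult in Hk.
  assert (Hj : (/ 2) ^ S j <= (rate ^ L) ^ S j)
    by (apply pow_incr; split; [lra | apply rate_pow_L]).
  change ((/ 2) ^ S j) with (/ 2 * (/ 2) ^ j) in Hj.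
  replace (1/2) with (/ 2) by field. lra.
Qed.

End DecayRate.

Section Setting.
Variables (X : NormedSpace) (nrm : Z -> X -> R) (A : Z -> X -> X)
  (B : seqR -> Prop) (nB : seqR -> R).
Hypothesis HX : complete X.
Hypothesis HB : is_banach_seq_space B nB.
Hypothesis Hadm : admissible B nB.
Hypothesis Hn : forall m, is_norm_on X (nrm m) /\ equiv_norm X (nrm m).
Hypothesis HA : forall m, bounded_linear X (A m).

Local Notation Y := (inY X nrm B).
Local Notation nY := (YB_norm X nrm nB).
Local Notation T := (TB X A).
Local Notation D := (inDTB X A nrm B).
Local Notation c := (chi_norm nB).

Lemma nrm_is_norm m : is_norm zero add scal (nrm m). Proof. apply Hn. Qed.
Lemma A_linear m : is_linear X (A m). Proof. apply HA. Qed.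

Lemma nrm_ge0 m x : 0 <= nrm m x. Proof. apply norm_ge0, nrm_is_norm. Qed.

Lemma nY_ge0 x : Y x -> 0 <= nY x.
Proof. apply (nB_ge0 B nB HB). Qed.

Lemma Y_le_scale x y a : Y x -> 0 <= a -> (forall n, nrm n (y n) <= a * nrm n (x n)) ->
  Y y /\ nY y <= a * nY x.
Proof.
  intros Hx Ha H.
  destruct (B_solid B nB HB (fun n => nrm n (y n)) (fun n => a * nrm n (x n)))
    as [H1 H2]; [apply (B_scal B nB HB), Hx| |].
  { intros n. pose proof (nrm_ge0 n (x n)). pose proof (nrm_ge0 n (y n)).
    rewrite !Rabs_pos_eq by nra. apply H. }
  split; [exact H1|]. unfold YB_norm. rewrite (nB_scal B nB HB) in H2 by exact Hx.
  rewrite Rabs_pos_eq in H2 by exact Ha. exact H2.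
Qed.

Lemma Y_le_sum x1 x2 y : Y x1 -> Y x2 ->
  (forall n, nrm n (y n) <= nrm n (x1 n) + nrm n (x2 n)) -> Y y /\ nY y <= nY x1 + nY x2.
Proof.
  intros H1 H2 H.
  destruct (B_solid B nB HB (fun n => nrm n (y n)) (fun n => nrm n (x1 n) + nrm n (x2 n)))
    as [G1 G2]; [apply (B_add B nB HB); assumption| |].
  { intros n. pose proof (nrm_ge0 n (x1 n)). pose proof (nrm_ge0 n (x2 n)).
    pose proof (nrm_ge0 n (y n)). specialize (H n). rewrite !Rabs_pos_eq; lra. }
  split; [exact G1|]. eapply Rle_trans; [apply G2 | apply (nB_add_le B nB HB); assumption].
Qed.

Lemma Y_zero : Y (fun _ => zero) /\ nY (fun _ => zero) = 0.
Proof.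
  unfold inY, YB_norm. replace (fun n => nrm n zero) with (fun _ : Z => 0).
  - split; [apply (B_zero B nB HB) | apply (nB_zero B nB HB Hadm)].
  - apply functional_extensionality. intros n. symmetry. apply norm_zero, nrm_is_norm.
Qed.

Lemma Y_add x y : Y x -> Y y ->
  Y (fun n => add (x n) (y n)) /\ nY (fun n => add (x n) (y n)) <= nY x + nY y.
Proof. intros. apply Y_le_sum; auto. intros n. apply norm_add_le, nrm_is_norm. Qed.

Lemma Y_sub x y : Y x -> Y y ->
  Y (fun n => sub (x n) (y n)) /\ nY (fun n => sub (x n) (y n)) <= nY x + nY y.
Proof. intros. apply Y_le_sum; auto. intros n. apply norm_sub_le, nrm_is_norm. Qed.

Lemma nY_scal a x : Y x -> nY (fun n => scal a (x n)) = Rabs a * nY x.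
Proof.
  intros Hx. unfold YB_norm. transitivity (nB (fun n => Rabs a * nrm n (x n))).
  - f_equal. apply functional_extensionality; intros n. apply norm_scal, nrm_is_norm.
  - rewrite (nB_scal B nB HB) by exact Hx. rewrite Rabs_Rabsolu. reflexivity.
Qed.

Lemma Y_scal a x : Y x -> Y (fun n => scal a (x n)).
Proof.
  intros Hx. apply (Y_le_scale x _ (Rabs a)); auto using Rabs_pos.
  intros n. rewrite norm_scal by apply nrm_is_norm. lra.
Qed.

Lemma nY_sub_sym x y : nY (fun n => sub (x n) (y n)) = nY (fun n => sub (y n) (x n)).
Proof.
  unfold YB_norm. f_equal. apply functional_extensionality. intros n.
  apply norm_sub_sym, nrm_is_norm.
Qed.

Lemma nY_coord_le x n : Y x -> nrm n (x n) * c n <= nY x.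
Proof.
  intros Hx. pose proof (nB_coord_le B nB HB Hadm _ n Hx) as H.
  rewrite Rabs_pos_eq in H by apply nrm_ge0. exact H.
Qed.

Lemma nY_eq0 x : Y x -> nY x = 0 -> forall n, x n = zero.
Proof. intros Hx H n. apply (norm_eq0 _ (nrm_is_norm n)), (nB_eq0 B nB HB _ Hx H). Qed.

Section Limit.
Variables (y : nat -> Z -> X) (t : nat -> R).
Hypothesis Hy : forall i, Y (y i).
Hypothesis Hinc : forall i, nY (fun n => sub (y (S i) n) (y i n)) <= t i - t (S i).
Hypothesis Ht_nonneg : forall i, 0 <= t i.
Hypothesis Ht_small : forall eps, 0 < eps -> exists i, t i < eps.

(* The tails of the series of increment norms form a dominating sequence in [B]. *)
Lemma Y_tail_majorant : exists rest : nat -> seqR,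
  (forall k, B (rest k) /\ nB (rest k) <= t k) /\
  (forall k j n, (k <= j)%nat -> nrm n (sub (y j n) (y k n)) <= rest k n).
Proof.
  set (s := fun i n => nrm n (sub (y (S i) n) (y i n))).
  assert (Hs : forall i, B (s i)) by (intros i; apply (Y_sub _ _ (Hy (S i)) (Hy i))).
  destruct (B_series_limit B nB HB Hadm s t Hs ltac:(intros; apply nrm_ge0) Hinc Ht_nonneg Ht_small)
    as [lim [Hlim_B [Hlim_tail Hlim_ge]]].
  exists (fun k n => lim n - partial_sum s k n). split.
  { intros k. split; [|apply Hlim_tail].
    apply (B_sub B nB HB); [exact Hlim_B | apply (partial_sum_B B nB HB); exact Hs]. }
  assert (Htele : forall k j n,
    nrm n (sub (y (k + j)%nat n) (y k n)) <= partial_sum s (k + j) n - partial_sum s k n).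
  { intros k j n. induction j as [|j IH].
    - rewrite Nat.add_0_r, sub_self, norm_zero by apply nrm_is_norm. lra.
    - rewrite Nat.add_succ_r. eapply Rle_trans.
      + apply (norm_sub_triangle _ (nrm_is_norm n) _ (y (k + j)%nat n)).
      + change (partial_sum s (S (k + j)) n)
          with (partial_sum s (k + j) n + nrm n (sub (y (S (k + j)) n) (y (k + j)%nat n))).
        lra. }
  intros k j n Hkj. replace j with (k + (j - k))%nat by lia.
  pose proof (Hlim_ge (k + (j - k))%nat n). pose proof (Htele k (j - k)%nat n). lra.
Qed.

Lemma Y_coord_limit (rest : nat -> seqR) :
  (forall k, B (rest k) /\ nB (rest k) <= t k) ->
  (forall k j n, (k <= j)%nat -> nrm n (sub (y j n) (y k n)) <= rest k n) ->
  exists l : Z -> X, forall k n, nrm n (sub (l n) (y k n)) <= rest k n.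
Proof.
  intros Hrest Hdom.
  assert (Hlim : forall n, exists ln : X, forall eps, 0 < eps -> exists N : nat,
            forall i, (N <= i)%nat -> norm (sub (y i n) ln) < eps).
  { intros n. destruct (proj2 (Hn n)) as [a [b [Ha [Hb Hab]]]].
    pose proof (chi_norm_pos B nB Hadm n) as Hc.
    apply HX. intros eps Heps. destruct (Ht_small (eps * a * c n / 2)) as [k Hk].
    { apply Rdiv_lt_0_compat; [|lra]. repeat apply Rmult_lt_0_compat; lra. }
    exists k. intros i j Hi Hj.
    pose proof (norm_sub_triangle _ (nrm_is_norm n) (y i n) (y k n) (y j n)) as Htri.
    rewrite (norm_sub_sym _ (nrm_is_norm n) (y k n)) in Htri.
    pose proof (Hdom k i n Hi). pose proof (Hdom k j n Hj).
    pose proof (nB_coord_le B nB HB Hadm _ n (proj1 (Hrest k))) as Hrk.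
    pose proof (Hdom k k n (le_n k)). pose proof (nrm_ge0 n (sub (y k n) (y k n))).
    rewrite Rabs_pos_eq in Hrk by lra. pose proof (proj2 (Hrest k)).
    pose proof (Hab (sub (y i n) (y j n))) as [Hlow _].
    assert (Hprod : a * c n * norm (sub (y i n) (y j n)) < a * c n * eps) by nra.
    apply Rmult_lt_reg_l in Hprod; [lra | nra]. }
  apply choice in Hlim as [l Hl]. exists l.
  intros k n. apply Rle_plus_epsilon. intros eps Heps.
  destruct (proj2 (Hn n)) as [a [b [Ha [Hb Hab]]]].
  destruct (Hl n (eps / b)) as [N HN]; [apply Rdiv_lt_0_compat; lra|].
  pose proof (HN (k + N)%nat ltac:(lia)) as Hclose.
  pose proof (Hab (sub (y (k + N)%nat n) (l n))) as [_ Hup].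
  assert (Hsmall : b * norm (sub (y (k + N)%nat n) (l n)) < eps).
  { assert (b * (eps / b) = eps) by (field; lra).
    assert (b * norm (sub (y (k + N)%nat n) (l n)) < b * (eps / b))
      by (apply Rmult_lt_compat_l; lra). lra. }
  pose proof (Hdom k (k + N)%nat n ltac:(lia)).
  pose proof (norm_sub_triangle _ (nrm_is_norm n) (l n) (y (k + N)%nat n) (y k n)) as Htri.
  rewrite (norm_sub_sym _ (nrm_is_norm n) (l n) (y (k + N)%nat n)) in Htri. lra.
Qed.

Lemma Y_limit : exists l, Y l /\ forall k, nY (fun n => sub (l n) (y k n)) <= t k.
Proof.
  destruct Y_tail_majorant as [rest [Hrest Hdom]].
  destruct (Y_coord_limit rest Hrest Hdom) as [l Hl].
  assert (Htail : forall k,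
    Y (fun n => sub (l n) (y k n)) /\ nY (fun n => sub (l n) (y k n)) <= t k).
  { intros k. destruct (B_solid B nB HB (fun n => nrm n (sub (l n) (y k n))) (rest k))
      as [G1 G2]; [apply Hrest| |].
    { intros n. pose proof (Hl k n). pose proof (nrm_ge0 n (sub (l n) (y k n))).
      rewrite !Rabs_pos_eq; lra. }
    split; [exact G1|]. eapply Rle_trans; [apply G2 | apply Hrest]. }
  exists l. split; [|intros k; apply Htail].
  replace l with (fun n => add (sub (l n) (y 0%nat n)) (y 0%nat n)).
  - apply Y_add; [apply Htail | apply Hy].
  - apply functional_extensionality; intros; apply sub_add_cancel.
Qed.

End Limit.

Definition impulse (m : Z) (v : X) : Z -> X := fun k => if Z.eq_dec k m then v else zero.

Lemma Y_impulse m v : Y (impulse m v) /\ nY (impulse m v) = nrm m v * c m.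
Proof.
  assert (E : (fun k => nrm k (impulse m v k)) = fun k => nrm m v * chi m k).
  { apply functional_extensionality. intros k. unfold impulse, chi.
    destruct (Z.eq_dec k m) as [->|]; [ring|]. rewrite norm_zero by apply nrm_is_norm. ring. }
  unfold inY, YB_norm. rewrite E. split; [apply (B_scal B nB HB), (B_chi B nB Hadm)|].
  rewrite (nB_scal B nB HB) by apply (B_chi B nB Hadm).
  rewrite Rabs_pos_eq by apply nrm_ge0. reflexivity.
Qed.

Lemma impulse_add m v w : impulse m (add v w) = fun k => add (impulse m v k) (impulse m w k).
Proof.
  apply functional_extensionality; intros k. unfold impulse.
  destruct (Z.eq_dec k m); [reflexivity | symmetry; apply add_0_l].
Qed.

Lemma impulse_scal m a v : impulse m (scal a v) = fun k => scal a (impulse m v k).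
Proof.
  apply functional_extensionality; intros k. unfold impulse.
  destruct (Z.eq_dec k m); [reflexivity | symmetry; apply scal_0_r].
Qed.

Lemma A_zero m : A m zero = zero. Proof. apply linear_zero, A_linear. Qed.

Lemma T_add x y : T (fun k => add (x k) (y k)) = fun n => add (T x n) (T y n).
Proof.
  apply functional_extensionality; intros n. unfold TB.
  rewrite linear_add by apply A_linear. apply sub_add_add.
Qed.

Lemma T_sub x y : T (fun k => sub (x k) (y k)) = fun n => sub (T x n) (T y n).
Proof.
  apply functional_extensionality; intros n. unfold TB.
  rewrite linear_sub by apply A_linear. apply sub_sub_sub.
Qed.

Lemma T_scal a x : T (fun k => scal a (x k)) = fun n => scal a (T x n).
Proof.
  apply functional_extensionality; intros n. unfold TB.
  rewrite linear_scal by apply A_linear. symmetry. apply scal_sub.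
Qed.

Lemma T_zero : T (fun _ => zero) = fun _ => zero.
Proof. apply functional_extensionality; intros n. unfold TB. rewrite A_zero. apply sub_self. Qed.

Lemma T_impulse m v : T (impulse m v) = fun k => sub (impulse m v k) (impulse (m + 1) (A m v) k).
Proof.
  apply functional_extensionality; intros k. unfold TB, impulse.
  destruct (Z.eq_dec (k - 1) m) as [E|E]; destruct (Z.eq_dec k (m + 1)) as [E'|E']; try lia.
  - rewrite E. reflexivity.
  - rewrite A_zero. reflexivity.
Qed.

Lemma TB_eq0 x k : T x k = zero -> x k = A (k - 1)%Z (x (k - 1)%Z).
Proof. apply sub_eq0. Qed.

Hypothesis HT : TB_bijective X A nrm B.

Lemma T_inj x x' : D x -> D x' -> T x = T x' -> x = x'.
Proof.
  intros Hx Hx' E. apply functional_extensionality.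
  apply (proj1 HT); auto. intros n. rewrite E. reflexivity.
Qed.

Lemma T_right_inverse : exists Tinv : (Z -> X) -> Z -> X,
  forall y, Y y -> D (Tinv y) /\ T (Tinv y) = y.
Proof.
  apply (choice (fun y x => Y y -> D x /\ T x = y)). intros y.
  destruct (classic (Y y)) as [Hy|Hy].
  - destruct (proj2 HT y Hy) as [x [Dx Tx]]. exists x. intros _. split; [exact Dx|].
    apply functional_extensionality. exact Tx.
  - exists y. intros; contradiction.
Qed.

Definition Tinv : (Z -> X) -> Z -> X :=
  proj1_sig (constructive_indefinite_description _ T_right_inverse).

Lemma Tinv_spec y : Y y -> D (Tinv y) /\ T (Tinv y) = y.
Proof. apply (proj2_sig (constructive_indefinite_description _ T_right_inverse)). Qed.

Lemma Y_Tinv y : Y y -> Y (Tinv y).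
Proof. intros Hy. apply (Tinv_spec y Hy). Qed.

Lemma Tinv_of x y : Y x -> Y y -> T x = y -> Tinv y = x.
Proof.
  intros Hx Hy E. destruct (Tinv_spec y Hy) as [H1 H2]. apply T_inj; [exact H1| |congruence].
  split; [exact Hx | rewrite E; exact Hy].
Qed.

Lemma Tinv_T x : D x -> Tinv (T x) = x.
Proof. intros [Hx HTx]. apply Tinv_of; auto. Qed.

Lemma Tinv_zero : Tinv (fun _ => zero) = fun _ => zero.
Proof. apply Tinv_of; [apply Y_zero | apply Y_zero | apply T_zero]. Qed.

Lemma Tinv_add y1 y2 : Y y1 -> Y y2 ->
  Tinv (fun k => add (y1 k) (y2 k)) = fun k => add (Tinv y1 k) (Tinv y2 k).
Proof.
  intros H1 H2. apply Tinv_of; [apply Y_add; apply Y_Tinv; auto | apply Y_add; auto|].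
  rewrite T_add, (proj2 (Tinv_spec _ H1)), (proj2 (Tinv_spec _ H2)). reflexivity.
Qed.

Lemma Tinv_sub y1 y2 : Y y1 -> Y y2 ->
  Tinv (fun k => sub (y1 k) (y2 k)) = fun k => sub (Tinv y1 k) (Tinv y2 k).
Proof.
  intros H1 H2. apply Tinv_of; [apply Y_sub; apply Y_Tinv; auto | apply Y_sub; auto|].
  rewrite T_sub, (proj2 (Tinv_spec _ H1)), (proj2 (Tinv_spec _ H2)). reflexivity.
Qed.

Lemma Tinv_scal a y : Y y -> Tinv (fun k => scal a (y k)) = fun k => scal a (Tinv y k).
Proof.
  intros H. apply Tinv_of; [apply Y_scal, Y_Tinv; auto | apply Y_scal; auto|].
  rewrite T_scal, (proj2 (Tinv_spec _ H)). reflexivity.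
Qed.

Lemma nrm_le_nY x n : Y x -> nrm n (x n) <= nY x / c n.
Proof.
  intros Hx. pose proof (nY_coord_le x n Hx). pose proof (chi_norm_pos B nB Hadm n).
  apply (Rmult_le_reg_r (c n)); [lra|]. unfold Rdiv. rewrite Rmult_assoc, Rinv_l; lra.
Qed.

Lemma T_coord_bound n : exists C, 0 <= C /\ forall w, Y w -> nrm n (T w n) <= C * nY w.
Proof.
  destruct (proj2 (Hn n)) as [a' [b [_ [Hb Hnb]]]].
  destruct (proj2 (Hn (n - 1)%Z)) as [a [b' [Ha [_ Hna]]]].
  destruct (proj2 (HA (n - 1)%Z)) as [CA HCA].
  pose proof (chi_norm_pos B nB Hadm n) as Hcn.
  pose proof (chi_norm_pos B nB Hadm (n - 1)%Z) as Hcn1.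
  set (CA' := Rmax CA 0). assert (HCA' : 0 <= CA') by apply Rmax_r.
  assert (Hinv : 0 < / (a * c (n - 1)%Z)) by (apply Rinv_0_lt_compat; nra).
  exists (/ c n + b * CA' * / (a * c (n - 1)%Z)). split.
  { pose proof (Rinv_0_lt_compat _ Hcn). assert (0 <= b * CA') by nra. nra. }
  intros w Hw. unfold TB. eapply Rle_trans; [apply norm_sub_le, nrm_is_norm|].
  set (w' := w (n - 1)%Z).
  assert (E1 : nrm n (w n) <= / c n * nY w).
  { rewrite Rmult_comm. apply nrm_le_nY, Hw. }
  assert (E2 : nrm n (A (n - 1)%Z w') <= b * CA' * / (a * c (n - 1)%Z) * nY w).
  { pose proof (Hnb (A (n - 1)%Z w')) as [_ Q1]. pose proof (Hna w') as [Q2 _].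
    pose proof (HCA w') as Q3. pose proof (norm_ge0 _ (norm_ax X) w') as Q4.
    assert (Q5 : norm (A (n - 1)%Z w') <= CA' * norm w').
    { eapply Rle_trans; [apply Q3 | apply Rmult_le_compat_r; [auto | apply Rmax_l]]. }
    assert (Q6 : a * norm w' <= nY w / c (n - 1)%Z)
      by (pose proof (nrm_le_nY w (n - 1)%Z Hw) as Hw'; fold w' in Hw'; lra).
    assert (Q7 : norm w' <= / (a * c (n - 1)%Z) * nY w).
    { apply (Rmult_le_reg_l a); [lra|]. rewrite Rinv_mult. unfold Rdiv in Q6.
      replace (a * (/ a * / c (n - 1)%Z * nY w)) with (nY w * / c (n - 1)%Z) by (field; lra). lra. }
    assert (Q8 : CA' * norm w' <= CA' * (/ (a * c (n - 1)%Z) * nY w))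
      by (apply Rmult_le_compat_l; auto).
    assert (Q9 : b * (CA' * norm w') <= b * (CA' * (/ (a * c (n - 1)%Z) * nY w)))
      by (apply Rmult_le_compat_l; lra).
    nra. }
  lra.
Qed.

Lemma Tinv_closed y z : Y y -> Y z ->
  (forall eps, 0 < eps -> exists w, Y w /\ nY (fun n => sub (w n) (y n)) < eps /\
                                   nY (fun n => sub (z n) (Tinv w n)) < eps) ->
  Tinv y = z.
Proof.
  intros Hy Hz Happrox. apply Tinv_of; auto.
  apply functional_extensionality; intros n. destruct (T_coord_bound n) as [C [HC0 HC]].
  apply sub_eq0, (norm_eq0 _ (nrm_is_norm n)), Rle_antisym; [|apply nrm_ge0].
  apply Rle_plus_epsilon. intros eps Heps. pose proof (chi_norm_pos B nB Hadm n).
  set (delta := Rmin (eps * c n / 2) (eps / (2 * (C + 1)))).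
  assert (Hdelta : 0 < delta) by (apply Rmin_pos; [nra | apply Rdiv_lt_0_compat; lra]).
  destruct (Happrox delta Hdelta) as [w [Hw [Hwy Hzw]]]. unfold delta in Hwy, Hzw.
  destruct (Tinv_spec w Hw) as [[HTw _] ETw].
  assert (Hd : Y (fun k => sub (z k) (Tinv w k))) by (apply Y_sub; auto).
  pose proof (HC _ Hd) as Q1. rewrite T_sub, ETw in Q1.
  pose proof (nrm_le_nY _ n (proj1 (Y_sub _ _ Hw Hy))) as Q2.
  assert (Q3 : nY (fun k => sub (w k) (y k)) / c n < eps / 2).
  { apply (Rmult_lt_reg_r (c n)); [lra|]. unfold Rdiv. rewrite Rmult_assoc, Rinv_l by lra.
    pose proof (Rmin_l (eps * c n / 2) (eps / (2 * (C + 1)))). lra. }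
  assert (Q4 : C * nY (fun k => sub (z k) (Tinv w k)) <= eps / 2).
  { pose proof (Rmin_r (eps * c n / 2) (eps / (2 * (C + 1)))).
    assert (C * (eps / (2 * (C + 1))) <= eps / 2).
    { unfold Rdiv. rewrite Rinv_mult.
      replace (C * (eps * (/ 2 * / (C + 1)))) with (eps / 2 * (C / (C + 1))) by (field; lra).
      assert (C / (C + 1) <= 1).
      { unfold Rdiv. apply (Rmult_le_reg_r (C + 1)); [lra|]. rewrite Rmult_assoc, Rinv_l; lra. }
      nra. }
    assert (C * nY (fun k => sub (z k) (Tinv w k)) <= C * (eps / (2 * (C + 1))))
      by (apply Rmult_le_compat_l; lra). lra. }
  rewrite <- (sub_add_sub (T z n) (w n) (y n)).
  eapply Rle_trans; [apply norm_add_le, nrm_is_norm|]. lra.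
Qed.

Lemma Y_nested_balls (G : nat -> (Z -> X) -> Prop) (next : nat -> (Z -> X) -> R -> (Z -> X) * R) :
  (forall k y0 r, Y y0 -> 0 < r ->
     Y (fst (next k y0 r)) /\ nY (fun n => sub (fst (next k y0 r) n) (y0 n)) < r /\
     0 < snd (next k y0 r) /\
     forall y', Y y' ->
       nY (fun n => sub (fst (next k y0 r) n) (y' n)) < snd (next k y0 r) -> G k y') ->
  exists l, Y l /\ forall k, G k l.
Proof.
  intros Hnext.
  set (ball := nat_rect (fun _ => ((Z -> X) * R)%type) (fun _ => zero, 1)
    (fun k q => let q' := next k (fst q) (snd q / 2) in (fst q', Rmin (snd q' / 2) (snd q / 4)))).
  assert (Hball : forall k, Y (fst (ball k)) /\ 0 < snd (ball k) /\ snd (ball k) <= (1/4) ^ k).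
  { induction k as [|k [IH1 [IH2 IH3]]]; [simpl; split; [apply Y_zero | lra]|].
    change ((1/4) ^ S k) with (1/4 * (1/4) ^ k). cbn [ball nat_rect fst snd].
    destruct (Hnext k (fst (ball k)) (snd (ball k) / 2) IH1 ltac:(lra)) as [Q1 [_ [Q3 _]]].
    split; [exact Q1|]. split; [apply Rmin_pos; lra|].
    eapply Rle_trans; [apply Rmin_r | lra]. }
  assert (Hshrink : forall k,
    nY (fun n => sub (fst (ball (S k)) n) (fst (ball k) n)) < snd (ball k) / 2 /\
    snd (ball (S k)) <= snd (ball k) / 4 /\
    forall y', Y y' -> nY (fun n => sub (fst (ball (S k)) n) (y' n)) <= snd (ball (S k)) -> G k y').
  { intros k. destruct (Hball k) as [I1 [I2 _]].
    destruct (Hnext k (fst (ball k)) (snd (ball k) / 2) I1 ltac:(lra)) as [Q1 [Q2 [Q3 Q4]]].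
    cbn [ball nat_rect fst snd]. split; [exact Q2|]. split; [apply Rmin_r|].
    intros y' Hy' H. apply Q4; auto. eapply Rle_lt_trans; [apply H|].
    eapply Rle_lt_trans; [apply Rmin_l | lra]. }
  destruct (Y_limit (fun k => fst (ball k)) (fun k => 2/3 * snd (ball k))) as [l [Hl Hlk]].
  - intros i. apply Hball.
  - intros i. destruct (Hshrink i) as [H1 [H2 _]]. lra.
  - intros i. pose proof (proj1 (proj2 (Hball i))). lra.
  - intros eps Heps. destruct (pow_lt_1_zero (1/4) ltac:(rewrite Rabs_pos_eq; lra) eps Heps)
      as [N HN]. exists N. specialize (HN N (le_n N)).
    rewrite Rabs_pos_eq in HN by (apply pow_le; lra). pose proof (Hball N). lra.
  - exists l. split; [exact Hl|]. intros k. apply (proj2 (proj2 (Hshrink k)) l Hl).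
    rewrite nY_sub_sym. pose proof (Hlk (S k)). pose proof (Hball (S k)). lra.
Qed.

Lemma Y_baire (F : nat -> (Z -> X) -> Prop) :
  (forall y, Y y -> exists k, F k y) ->
  exists k y0 r, Y y0 /\ 0 < r /\
    forall y, Y y -> nY (fun n => sub (y n) (y0 n)) < r ->
    forall eps, 0 < eps -> exists y', Y y' /\ nY (fun n => sub (y n) (y' n)) < eps /\ F k y'.
Proof.
  intros Hcover. apply NNPP. intros Hno.
  assert (Hstep : forall k y0 r, exists q : (Z -> X) * R, Y y0 -> 0 < r ->
    Y (fst q) /\ nY (fun n => sub (fst q n) (y0 n)) < r /\ 0 < snd q /\
    forall y', Y y' -> nY (fun n => sub (fst q n) (y' n)) < snd q -> ~ F k y').
  { intros k y0 r. destruct (classic (Y y0 /\ 0 < r)) as [[Hy0 Hr]|Hc]; [|exists (y0, r); tauto].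
    apply NNPP; intro H1. apply Hno. exists k, y0, r. split; [exact Hy0|]. split; [exact Hr|].
    intros y Hy Hyr eps Heps. apply NNPP; intro H2. apply H1. exists (y, eps). intros _ _.
    simpl. repeat split; auto. intros y' Hy' Hyy' HF. apply H2. exists y'. auto. }
  destruct (Y_nested_balls (fun k y => ~ F k y)
    (fun k y0 r => proj1_sig (constructive_indefinite_description _ (Hstep k y0 r))))
    as [l [Hl HnF]].
  - intros k y0 r. exact (proj2_sig (constructive_indefinite_description _ (Hstep k y0 r))).
  - destruct (Hcover l Hl) as [k Hk]. exact (HnF k Hk).
Qed.

Lemma Y_nY_eq0 y : Y y -> nY y = 0 -> y = fun _ => zero.
Proof. intros Hy H. apply functional_extensionality. exact (nY_eq0 y Hy H). Qed.

Lemma Tinv_approx_bounded : exists C, 0 <= C /\ forall y, Y y -> forall eps, 0 < eps ->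
  exists y', Y y' /\ nY (fun n => sub (y n) (y' n)) < eps /\ nY (Tinv y') <= C * nY y.
Proof.
  destruct (Y_baire (fun k y => nY (Tinv y) <= INR k)) as [k [y0 [r [Hy0 [Hr Hball]]]]].
  { intros y Hy. destruct (INR_unbounded (nY (Tinv y))) as [k Hk]. exists k. lra. }
  pose proof (nY_ge0 _ (Y_Tinv _ Hy0)). pose proof (pos_INR k).
  exists (2 * (INR k + nY (Tinv y0)) / r).
  split; [apply Rmult_le_pos; [lra | left; apply Rinv_0_lt_compat; lra]|].
  intros y Hy eps Heps. pose proof (nY_ge0 _ Hy).
  destruct (Req_dec (nY y) 0) as [Hy0'|Hpos].
  { exists y. rewrite (Y_nY_eq0 y Hy Hy0'), Tinv_zero, (proj2 Y_zero).
    replace (fun n => sub (@zero X) zero) with (fun _ : Z => @zero X)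
      by (apply functional_extensionality; intros; symmetry; apply sub_self).
    rewrite (proj2 Y_zero). split; [apply Y_zero | lra]. }
  set (a := nY y) in *. set (t := r / (2 * a)).
  assert (Ht : 0 < t) by (unfold t; apply Rdiv_lt_0_compat; lra).
  set (yt := fun n => add (y0 n) (scal t (y n))).
  assert (Hyt : Y yt) by (apply Y_add; [exact Hy0 | apply Y_scal, Hy]).
  assert (Hyt_near : nY (fun n => sub (yt n) (y0 n)) < r).
  { unfold yt.
    replace (fun n => sub (add (y0 n) (scal t (y n))) (y0 n)) with (fun n => scal t (y n))
      by (apply functional_extensionality; intros; symmetry; apply add_sub_cancel_l).
    rewrite nY_scal, Rabs_pos_eq by (auto; lra). fold a. unfold t. field_simplify; lra. }
  destruct (Hball yt Hyt Hyt_near (t * eps) ltac:(nra)) as [y1 [Hy1 [Hclose Hbound]]].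
  exists (fun n => scal (/ t) (sub (y1 n) (y0 n))).
  assert (Hd : Y (fun n => sub (y1 n) (y0 n))) by (apply Y_sub; auto).
  split; [apply Y_scal, Hd|]. split.
  - replace (fun n => sub (y n) (scal (/ t) (sub (y1 n) (y0 n))))
      with (fun n => scal (/ t) (sub (yt n) (y1 n)))
      by (apply functional_extensionality; intros; symmetry; apply sub_scal_inv; lra).
    rewrite nY_scal by (apply Y_sub; auto).
    rewrite Rabs_pos_eq by (left; apply Rinv_0_lt_compat, Ht).
    apply (Rmult_lt_reg_l t); [exact Ht|]. rewrite <- Rmult_assoc, Rinv_r, Rmult_1_l by lra. lra.
  - rewrite Tinv_scal, Tinv_sub by auto.
    rewrite nY_scal by (apply Y_sub; apply Y_Tinv; auto).
    rewrite Rabs_pos_eq by (left; apply Rinv_0_lt_compat, Ht).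
    pose proof (proj2 (Y_sub _ _ (Y_Tinv _ Hy1) (Y_Tinv _ Hy0))).
    replace (2 * (INR k + nY (Tinv y0)) / r * a) with (/ t * (INR k + nY (Tinv y0)))
      by (unfold t; field; lra).
    apply Rmult_le_compat_l; [left; apply Rinv_0_lt_compat, Ht | lra].
Qed.

Lemma nY_opp x : nY (fun n => opp (x n)) = nY x.
Proof.
  unfold YB_norm. f_equal. apply functional_extensionality. intros n.
  apply norm_opp, nrm_is_norm.
Qed.

Section Approximation.
Variable C : R.
Hypothesis HC : 0 <= C.
Hypothesis Happrox : forall y, Y y -> forall eps, 0 < eps ->
  exists y', Y y' /\ nY (fun n => sub (y n) (y' n)) < eps /\ nY (Tinv y') <= C * nY y.

Lemma geometric_decomposition y : Y y -> 0 < nY y ->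
  exists rest piece : nat -> Z -> X, rest 0%nat = y /\ forall i,
    rest (S i) = (fun n => sub (rest i n) (piece i n)) /\
    Y (rest i) /\ nY (rest i) <= nY y * (1/2) ^ i /\
    Y (piece i) /\ nY (Tinv (piece i)) <= C * nY y * (1/2) ^ i.
Proof.
  intros Hy Hpos. set (a := nY y) in *.
  assert (Hap : exists approx : (Z -> X) * R -> Z -> X, forall p, Y (fst p) -> 0 < snd p ->
    Y (approx p) /\ nY (fun n => sub (fst p n) (approx p n)) < snd p /\
    nY (Tinv (approx p)) <= C * nY (fst p)).
  { apply (choice (fun (p : (Z -> X) * R) y' => Y (fst p) -> 0 < snd p ->
      Y y' /\ nY (fun n => sub (fst p n) (y' n)) < snd p /\ nY (Tinv y') <= C * nY (fst p))).
    intros [v eps]. destruct (classic (Y v /\ 0 < eps)) as [[H1 H2]|Hnot].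
    - destruct (Happrox v H1 eps H2) as [y' Hy']. exists y'. auto.
    - exists v. simpl. tauto. }
  destruct Hap as [approx Happ].
  set (rest := nat_rect (fun _ => Z -> X) y
    (fun i r => fun n => sub (r n) (approx (r, a * (1/2) ^ S i) n))).
  assert (Hhalf : forall i, 0 < a * (1/2) ^ i)
    by (intros; apply Rmult_lt_0_compat; [lra | apply pow_lt; lra]).
  assert (Hrest : forall i, Y (rest i) /\ nY (rest i) <= a * (1/2) ^ i).
  { induction i as [|i [IH1 IH2]]; [simpl; split; [exact Hy | unfold a; lra]|].
    destruct (Happ (rest i, a * (1/2) ^ S i) IH1 (Hhalf (S i))) as [Q1 [Q2 _]].
    split; [apply Y_sub; assumption | simpl in Q2 |- *; lra]. }
  exists rest, (fun i => approx (rest i, a * (1/2) ^ S i)). split; [reflexivity|].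
  intros i. destruct (Hrest i) as [I1 I2].
  destruct (Happ (rest i, a * (1/2) ^ S i) I1 (Hhalf (S i))) as [Q1 [_ Q3]].
  split; [reflexivity|]. split; [exact I1|]. split; [exact I2|]. split; [exact Q1|].
  simpl in Q3. eapply Rle_trans; [apply Q3|]. rewrite Rmult_assoc. apply Rmult_le_compat_l; auto.
Qed.

(* Summing the geometric decomposition of [y] through [Tinv] converges, and closedness
   of the graph identifies the sum with [Tinv y]. *)
Lemma Tinv_bounded_of_approx y : Y y -> nY (Tinv y) <= 2 * C * nY y.
Proof.
  intros Hy. pose proof (nY_ge0 _ Hy). destruct (Req_dec (nY y) 0) as [Hy0|Hpos].
  { rewrite (Y_nY_eq0 y Hy Hy0), Tinv_zero, (proj2 Y_zero). lra. }
  destruct (geometric_decomposition y Hy ltac:(lra)) as [rest [piece [Hrest0 Hdec]]].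
  set (a := nY y) in *.
  destruct (Y_limit (fun p => Tinv (rest p)) (fun p => 2 * C * a * (1/2) ^ p)) as [l [Hl Hlp]].
  - intros p. apply Y_Tinv, Hdec.
  - intros p. destruct (Hdec p) as [Hnext [Hr _]]. destruct (Hdec p) as [_ [_ [_ [Hpc HTpc]]]].
    rewrite Hnext, Tinv_sub by assumption.
    replace (fun n => sub (sub (Tinv (rest p) n) (Tinv (piece p) n)) (Tinv (rest p) n))
      with (fun n => opp (Tinv (piece p) n))
      by (apply functional_extensionality; intros; symmetry; apply sub_sub_cancel_l).
    rewrite nY_opp. simpl. lra.
  - intros p. pose proof (pow_le (1/2) p ltac:(lra)). assert (0 <= C * a) by nra. nra.
  - intros eps Heps. apply half_pow_small, Heps.
  - assert (Hl0 : l = fun _ => zero).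
    { rewrite <- Tinv_zero. symmetry. apply Tinv_closed; [apply Y_zero | exact Hl|].
      intros eps Heps. destruct (half_pow_small (2 * C * a + a) eps Heps) as [p Hp].
      exists (rest p). destruct (Hdec p) as [_ [H1 [H2 _]]]. split; [exact H1|].
      replace (fun n => sub (rest p n) zero) with (rest p)
        by (apply functional_extensionality; intros; symmetry; apply sub_0_r).
      pose proof (Hlp p). pose proof (pow_le (1/2) p ltac:(lra)). split; nra. }
    pose proof (Hlp 0%nat) as H0. rewrite Hl0, Hrest0 in H0. simpl in H0.
    replace (fun n => sub zero (Tinv y n)) with (fun n => opp (Tinv y n)) in H0
      by (apply functional_extensionality; intros; symmetry; apply sub_0_l).
    rewrite nY_opp in H0. lra.
Qed.

End Approximation.

Lemma Tinv_bounded : exists K, 1 <= K /\ forall y, Y y -> nY (Tinv y) <= K * nY y.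
Proof.
  destruct Tinv_approx_bounded as [C [HC Happrox]].
  exists (Rmax (2 * C) 1). split; [apply Rmax_r|]. intros y Hy.
  eapply Rle_trans; [apply (Tinv_bounded_of_approx C HC Happrox y Hy)|].
  apply Rmult_le_compat_r; [apply nY_ge0, Hy | apply Rmax_l].
Qed.

Lemma T_bounded_below : exists K, 1 <= K /\ forall x, D x -> nY x <= K * nY (T x).
Proof.
  destruct Tinv_bounded as [K [HK1 HK]]. exists K. split; [exact HK1|].
  intros x Dx. rewrite <- (Tinv_T x Dx) at 1. apply HK, Dx.
Qed.

Lemma evol_linear a k : is_linear X (evol A a k).
Proof.
  induction k as [|k IH]; split; intros; simpl; auto.
  - rewrite (linear_add _ IH), linear_add by apply A_linear. reflexivity.
  - rewrite (linear_scal _ IH), linear_scal by apply A_linear. reflexivity.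
Qed.

Lemma evol_add a i j v : evol A a (i + j) v = evol A (a + Z.of_nat i)%Z j (evol A a i v).
Proof.
  induction j as [|j IH]; [rewrite Nat.add_0_r; reflexivity|].
  rewrite Nat.add_succ_r. simpl. rewrite IH. f_equal. lia.
Qed.

Lemma evol_of_rec u a k :
  (forall i : nat, (i < k)%nat ->
     u (a + Z.of_nat i + 1)%Z = A (a + Z.of_nat i)%Z (u (a + Z.of_nat i)%Z)) ->
  u (a + Z.of_nat k)%Z = evol A a k (u a).
Proof.
  induction k as [|k IH]; intros H; [rewrite Z.add_0_r; reflexivity|].
  replace (a + Z.of_nat (S k))%Z with (a + Z.of_nat k + 1)%Z by lia.
  rewrite H by lia. cbn [evol]. rewrite IH by (intros; apply H; lia). reflexivity.
Qed.

Definition trunc_lt (q : Z) (u : Z -> X) : Z -> X := fun k => if Z_lt_dec k q then u k else zero.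
Definition trunc_ge (q : Z) (u : Z -> X) : Z -> X := fun k => if Z_lt_dec k q then zero else u k.

Lemma Y_trunc_lt q u : Y u -> Y (trunc_lt q u).
Proof.
  intros H. refine (proj1 (Y_le_scale u _ 1 H ltac:(lra) _)). intros k. unfold trunc_lt.
  destruct (Z_lt_dec k q); [lra|]. rewrite norm_zero by apply nrm_is_norm.
  pose proof (nrm_ge0 k (u k)). lra.
Qed.

Lemma Y_trunc_ge q u : Y u -> Y (trunc_ge q u).
Proof.
  intros H. refine (proj1 (Y_le_scale u _ 1 H ltac:(lra) _)). intros k. unfold trunc_ge.
  destruct (Z_lt_dec k q); [|lra]. rewrite norm_zero by apply nrm_is_norm.
  pose proof (nrm_ge0 k (u k)). lra.
Qed.

Definition green (m : Z) (v : X) : Z -> X := Tinv (impulse m v).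

Definition P (m : Z) (v : X) : X := green m v m.

Lemma Y_green m v : Y (green m v). Proof. apply Y_Tinv, Y_impulse. Qed.
Lemma D_green m v : D (green m v). Proof. apply (Tinv_spec _ (proj1 (Y_impulse m v))). Qed.
Lemma T_green m v : T (green m v) = impulse m v.
Proof. apply (Tinv_spec _ (proj1 (Y_impulse m v))). Qed.

Lemma green_of_T u m v : Y u -> T u = impulse m v -> green m v = u.
Proof. intros Hu E. apply Tinv_of; [exact Hu | apply Y_impulse | exact E]. Qed.

Lemma green_rec m v k : k <> m -> green m v k = A (k - 1)%Z (green m v (k - 1)%Z).
Proof.
  intros H. apply TB_eq0. rewrite T_green. unfold impulse.
  destruct (Z.eq_dec k m); [lia | reflexivity].
Qed.

Lemma green_jump m v : A (m - 1)%Z (green m v (m - 1)%Z) = sub (P m v) v.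
Proof.
  pose proof (f_equal (fun f => f m) (T_green m v)) as H. simpl in H.
  unfold TB, impulse in H. destruct (Z.eq_dec m m); [|lia].
  unfold P. rewrite <- (sub_sub_cancel (green m v m) (A (m - 1)%Z (green m v (m - 1)%Z))), H.
  reflexivity.
Qed.

Lemma green_forward m v k : green m v (m + Z.of_nat k)%Z = evol A m k (P m v).
Proof.
  apply evol_of_rec. intros i _. rewrite green_rec by lia. f_equal; [|f_equal]; lia.
Qed.

Lemma green_trunc_lt u q : Y u -> (forall k, (k <= q)%Z -> T u k = zero) ->
  green q (opp (u q)) = trunc_lt q u.
Proof.
  intros Hu H. apply green_of_T; [apply Y_trunc_lt, Hu|].
  apply functional_extensionality. intros k. unfold TB, trunc_lt, impulse.
  destruct (Z_lt_dec k q); destruct (Z_lt_dec (k - 1) q); destruct (Z.eq_dec k q); try lia.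
  - apply H. lia.
  - subst k. rewrite (TB_eq0 u q (H q ltac:(lia))), sub_0_l. reflexivity.
  - rewrite A_zero. apply sub_self.
Qed.

Lemma green_lt m v q : (q < m)%Z -> green q (opp (green m v q)) = trunc_lt q (green m v).
Proof.
  intros Hq. apply green_trunc_lt; [apply Y_green|]. intros k Hk. rewrite T_green.
  unfold impulse. destruct (Z.eq_dec k m); [lia | reflexivity].
Qed.

Lemma P_linear m : is_linear X (P m).
Proof.
  split.
  - intros v w. unfold P, green. rewrite impulse_add, Tinv_add by apply Y_impulse. reflexivity.
  - intros a v. unfold P, green. rewrite impulse_scal, Tinv_scal by apply Y_impulse. reflexivity.
Qed.


Lemma P_idem m v : P m (P m v) = P m v.
Proof.
  unfold P at 1. rewrite (green_of_T (trunc_ge m (green m v))).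
  - unfold trunc_ge. destruct (Z_lt_dec m m); [lia | reflexivity].
  - apply Y_trunc_ge, Y_green.
  - apply functional_extensionality. intros k. unfold TB, trunc_ge, impulse.
    destruct (Z_lt_dec k m); destruct (Z_lt_dec (k - 1) m); destruct (Z.eq_dec k m); try lia.
    + rewrite A_zero. apply sub_self.
    + subst k. rewrite A_zero. apply sub_0_r.
    + pose proof (f_equal (fun f => f k) (T_green m v)) as Hk. simpl in Hk.
      unfold TB, impulse in Hk. destruct (Z.eq_dec k m); [lia | exact Hk].
Qed.

Lemma P_commute m v : A m (P m v) = P (m + 1)%Z (A m v).
Proof.
  unfold P at 2. rewrite (green_of_T (fun k => sub (green m v k) (impulse m v k))).
  - unfold impulse. destruct (Z.eq_dec (m + 1) m); [lia|]. rewrite sub_0_r, green_rec by lia.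
    replace (m + 1 - 1)%Z with m by lia. reflexivity.
  - apply Y_sub; [apply Y_green | apply Y_impulse].
  - rewrite T_sub, T_green, T_impulse. apply functional_extensionality. intros k.
    apply sub_sub_cancel.
Qed.

Lemma P_ker_inj m x y : P m x = zero -> P m y = zero -> A m x = A m y -> x = y.
Proof.
  intros Hx Hy Exy. apply sub_eq0. set (d := sub x y).
  assert (Pd : P m d = zero)
    by (unfold d; rewrite (linear_sub _ (P_linear m)), Hx, Hy; apply sub_self).
  assert (Ad : A m d = zero)
    by (unfold d; rewrite (linear_sub _ (A_linear m)), Exy; apply sub_self).
  assert (Hd : green m d = impulse m d).
  { apply green_of_T; [apply Y_impulse|]. rewrite T_impulse, Ad.
    apply functional_extensionality. intros k. unfold impulse at 2.
    destruct (Z.eq_dec k (m + 1)); apply sub_0_r. }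
  unfold P in Pd. rewrite Hd in Pd. unfold impulse in Pd. destruct (Z.eq_dec m m); [exact Pd | lia].
Qed.

Lemma P_ker_surj m y : P (m + 1)%Z y = zero -> exists x, P m x = zero /\ A m x = y.
Proof.
  intros Hy. exists (opp (green (m + 1) y m)). split.
  - unfold P. rewrite (green_lt (m + 1) y m) by lia. unfold trunc_lt.
    destruct (Z_lt_dec m m); [lia | reflexivity].
  - rewrite (linear_opp _ (A_linear m)). pose proof (green_jump (m + 1) y) as H.
    replace (m + 1 - 1)%Z with m in H by lia. rewrite H, Hy, sub_0_l. apply opp_opp.
Qed.

Lemma evol_range n j y : P n y = y -> P (n + Z.of_nat j)%Z (evol A n j y) = evol A n j y.
Proof.
  intros H. induction j as [|j IH]; [rewrite Z.add_0_r; exact H|].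
  replace (n + Z.of_nat (S j))%Z with (n + Z.of_nat j + 1)%Z by lia. cbn [evol].
  rewrite <- P_commute, IH. reflexivity.
Qed.

Lemma evol_ker n j y : P n y = zero -> P (n + Z.of_nat j)%Z (evol A n j y) = zero.
Proof.
  intros H. induction j as [|j IH]; [rewrite Z.add_0_r; exact H|].
  replace (n + Z.of_nat (S j))%Z with (n + Z.of_nat j + 1)%Z by lia. cbn [evol].
  rewrite <- P_commute, IH. apply A_zero.
Qed.

Lemma evol_ker_inj n j y y' :
  P n y = zero -> P n y' = zero -> evol A n j y = evol A n j y' -> y = y'.
Proof.
  intros H H'. induction j as [|j IH]; intros E; [exact E|].
  apply IH. apply (P_ker_inj (n + Z.of_nat j)); try apply evol_ker; auto.
Qed.

Section Estimates.
Variables N K : R.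
Hypothesis HN1 : 1 <= N.
Hypothesis HN : forall m n, c m <= N * c n.
Hypothesis HK1 : 1 <= K.
Hypothesis HK : forall x, D x -> nY x <= K * nY (T x).

Definition M := K * K * N.

Lemma M_ge1 : 1 <= M.
Proof. unfold M. assert (1 <= K * K) by nra. nra. Qed.

Lemma nY_green m v : nY (green m v) <= K * (nrm m v * c m).
Proof. rewrite <- (proj2 (Y_impulse m v)), <- T_green. apply HK, D_green. Qed.

Lemma K_nY_green_le m v n : K * nY (green m v) <= M * nrm m v * c n.
Proof.
  pose proof (nY_green m v). pose proof (HN m n). pose proof (nrm_ge0 m v).
  pose proof (chi_norm_pos B nB Hadm m). assert (0 <= K * K) by nra.
  assert (K * nY (green m v) <= K * K * nrm m v * c m) by nra.
  assert (K * K * nrm m v * c m <= K * K * nrm m v * (N * c n)).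
  { apply Rmult_le_compat_l; [|lra]. apply Rmult_le_pos; lra. }
  unfold M. nra.
Qed.

Lemma green_bound m v n : nrm n (green m v n) <= M * nrm m v.
Proof.
  pose proof (chi_norm_pos B nB Hadm n). apply (Rmult_le_reg_r (c n)); [lra|].
  pose proof (nY_coord_le _ n (Y_green m v)). pose proof (K_nY_green_le m v n).
  pose proof (nY_ge0 _ (Y_green m v)). nra.
Qed.

(* For a solution [u] of the homogeneous equation away from [m], [T (w u)] is
   [(w_k - w_{k-1}) u_k], so a weight with unit increments costs at most [nY u]. *)
Lemma weighted_bound u m w W : Y u -> (forall k, k <> m -> u k = A (k - 1)%Z (u (k - 1)%Z)) ->
  0 <= W -> (forall k, Rabs (w k) <= W) ->
  (forall k, (w (k - 1)%Z = 0 /\ Rabs (w k) <= 1) \/ (k <> m /\ Rabs (w k - w (k - 1)%Z) <= 1)) ->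
  forall n, Rabs (w n) * nrm n (u n) * c n <= K * nY u.
Proof.
  intros Hu Hrec HW Hw Hinc n. set (z := fun k => scal (w k) (u k)).
  assert (Yz : Y z).
  { refine (proj1 (Y_le_scale u z W Hu HW _)). intros k. unfold z.
    rewrite norm_scal by apply nrm_is_norm. apply Rmult_le_compat_r; [apply nrm_ge0 | apply Hw]. }
  assert (HTz : forall k, nrm k (T z k) <= 1 * nrm k (u k)).
  { intros k. pose proof (nrm_ge0 k (u k)). unfold TB, z.
    destruct (Hinc k) as [[H0 H1]|[H0 H1]].
    - rewrite H0, scal_0_l, A_zero, sub_0_r, norm_scal by apply nrm_is_norm.
      apply Rmult_le_compat_r; lra.
    - rewrite (linear_scal _ (A_linear _)), <- Hrec by exact H0.
      rewrite sub_scal, norm_scal by apply nrm_is_norm. apply Rmult_le_compat_r; lra. }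
  destruct (Y_le_scale u (T z) 1 Hu ltac:(lra) HTz) as [YTz nTz].
  pose proof (HK z (conj Yz YTz)). pose proof (nY_coord_le z n Yz) as Hz.
  unfold z in Hz at 1. rewrite norm_scal in Hz by apply nrm_is_norm.
  pose proof (nY_ge0 _ Hu). nra.
Qed.

Lemma weighted_green m v w W : 0 <= W -> (forall k, Rabs (w k) <= W) ->
  (forall k, (w (k - 1)%Z = 0 /\ Rabs (w k) <= 1) \/ (k <> m /\ Rabs (w k - w (k - 1)%Z) <= 1)) ->
  forall n, Rabs (w n) * nrm n (green m v n) <= M * nrm m v.
Proof.
  intros HW Hw Hinc n. pose proof (chi_norm_pos B nB Hadm n).
  pose proof (weighted_bound (green m v) m w W (Y_green m v) (green_rec m v) HW Hw Hinc n).
  pose proof (K_nY_green_le m v n). apply (Rmult_le_reg_r (c n)); [lra|]. nra.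
Qed.

Lemma Rabs_IZR_le1 z : (-1 <= z <= 1)%Z -> Rabs (IZR z) <= 1.
Proof.
  intros H. assert (Hz : IZR (-1) <= IZR z <= IZR 1) by (split; apply IZR_le; lia).
  apply Rabs_le. simpl in Hz. lra.
Qed.

(* The ramp [0, 1, ..., k+1, k+1, ...] starting at [m]. *)
Lemma green_forward_ramp m v k :
  nrm (m + Z.of_nat k)%Z (evol A m k (P m v)) * (INR k + 1) <= M * nrm m v.
Proof.
  rewrite <- green_forward.
  set (w := fun j => if Z_lt_dec j m then 0 else IZR (Z.min (j - m + 1) (Z.of_nat k + 1))).
  assert (HW : 0 <= IZR (Z.of_nat k + 1)) by (apply IZR_le; lia).
  pose proof (weighted_green m v w _ HW) as H.
  assert (Hwn : Rabs (w (m + Z.of_nat k)%Z) = INR k + 1).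
  { unfold w. destruct (Z_lt_dec (m + Z.of_nat k) m); [lia|].
    replace (Z.min (m + Z.of_nat k - m + 1) (Z.of_nat k + 1)) with (Z.of_nat k + 1)%Z by lia.
    rewrite plus_IZR, <- INR_IZR_INZ. apply Rabs_pos_eq. pose proof (pos_INR k). lra. }
  rewrite <- Hwn, Rmult_comm. apply H.
  - intros j. unfold w. destruct (Z_lt_dec j m); [rewrite Rabs_R0; exact HW|].
    rewrite Rabs_pos_eq; apply IZR_le; lia.
  - intros j. unfold w. destruct (Z_lt_dec j m); destruct (Z_lt_dec (j - 1) m); try lia.
    + left. rewrite Rabs_R0. lra.
    + left. split; [reflexivity | apply Rabs_IZR_le1; lia].
    + right. split; [lia|]. rewrite <- minus_IZR. apply Rabs_IZR_le1. lia.
Qed.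

(* The ramp [..., m-1-n, m-1-n, ..., 1, 0] ending at [m]. *)
Lemma green_backward_ramp m v n : (n < m)%Z ->
  nrm n (green m v n) * IZR (m - n) <= 2 * M * nrm m v.
Proof.
  intros Hnm.
  set (w := fun j => if Z_lt_dec j m then IZR (Z.min (m - 1 - j) (m - 1 - n)) else 0).
  assert (HW : 0 <= IZR (m - 1 - n)) by (apply IZR_le; lia).
  assert (Hwn : Rabs (w n) = IZR (m - 1 - n)).
  { unfold w. destruct (Z_lt_dec n m); [|lia].
    rewrite Z.min_id. apply Rabs_pos_eq, HW. }
  pose proof (weighted_green m v w _ HW) as H.
  assert (Hramp : IZR (m - 1 - n) * nrm n (green m v n) <= M * nrm m v).
  { rewrite <- Hwn. apply H.
    - intros j. unfold w. destruct (Z_lt_dec j m); [|rewrite Rabs_R0; exact HW].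
      rewrite Rabs_pos_eq; apply IZR_le; lia.
    - intros j. unfold w. destruct (Z_lt_dec j m); destruct (Z_lt_dec (j - 1) m); try lia.
      + right. split; [lia|]. rewrite <- minus_IZR. apply Rabs_IZR_le1. lia.
      + left. split; [|rewrite Rabs_R0; lra].
        replace (Z.min (m - 1 - (j - 1)) (m - 1 - n)) with 0%Z by lia. reflexivity.
      + left. rewrite Rabs_R0. lra. }
  pose proof (green_bound m v n).
  replace (IZR (m - n)) with (IZR (m - 1 - n) + 1) by (rewrite <- plus_IZR; f_equal; lia).
  lra.
Qed.

Variable L : nat.
Hypothesis HL : 4 * M <= INR L.

Lemma L_pos : (0 < L)%nat.
Proof. destruct L; [simpl in HL; pose proof M_ge1; lra | lia]. Qed.

Lemma half_le_of_ramp a b : 0 <= a -> 0 <= b -> a * (2 * M) <= M * b -> a <= / 2 * b.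
Proof. intros Ha Hb H. pose proof M_ge1. nra. Qed.

Lemma forward_halving j : forall m v, P m v = v -> forall k, (j * L <= k)%nat ->
  nrm (m + Z.of_nat k)%Z (evol A m k v) <= M * (1/2) ^ j * nrm m v.
Proof.
  induction j as [|j IH]; intros m v Hv k Hk.
  - replace (evol A m k v) with (green m v (m + Z.of_nat k)%Z)
      by (rewrite green_forward, Hv; reflexivity).
    simpl. rewrite Rmult_1_r. apply green_bound.
  - replace k with (L + (k - L))%nat by (simpl in Hk; lia).
    rewrite evol_add, Nat2Z.inj_add, Z.add_assoc. set (v' := evol A m L v).
    assert (Hv' : P (m + Z.of_nat L)%Z v' = v') by (apply evol_range, Hv).
    pose proof (IH _ v' Hv' (k - L)%nat ltac:(simpl in Hk; lia)) as Hrest.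
    assert (Hhalf : nrm (m + Z.of_nat L)%Z v' <= / 2 * nrm m v).
    { pose proof (green_forward_ramp m v L) as H. rewrite Hv in H. fold v' in H.
      pose proof (nrm_ge0 (m + Z.of_nat L)%Z v'). pose proof M_ge1.
      apply half_le_of_ramp; try apply nrm_ge0. nra. }
    pose proof (pow_le (1/2) j ltac:(lra)). pose proof M_ge1.
    eapply Rle_trans; [exact Hrest|]. simpl.
    replace (M * (1 / 2 * (1 / 2) ^ j) * nrm m v) with (M * (1/2) ^ j * (/ 2 * nrm m v)) by field.
    apply Rmult_le_compat_l; [nra | exact Hhalf].
Qed.

Lemma backward_halving j : forall m v n, (n + Z.of_nat (j * L) < m)%Z ->
  nrm n (green m v n) <= M * (1/2) ^ j * nrm m v.
Proof.
  pose proof L_pos. induction j as [|j IH]; intros m v n Hnm.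
  - rewrite Rmult_1_r. apply green_bound.
  - set (m' := (m - Z.of_nat L)%Z).
    assert (Hun : green m v n = green m' (opp (green m v m')) n).
    { rewrite green_lt by lia. unfold trunc_lt. destruct (Z_lt_dec n m'); [reflexivity|].
      simpl in Hnm. lia. }
    rewrite Hun. eapply Rle_trans; [apply IH; simpl in Hnm; lia|].
    rewrite norm_opp by apply nrm_is_norm.
    assert (Hhalf : nrm m' (green m v m') <= / 2 * nrm m v).
    { pose proof (green_backward_ramp m v m' ltac:(lia)) as Hramp.
      replace (m - m')%Z with (Z.of_nat L) in Hramp by lia. rewrite <- INR_IZR_INZ in Hramp.
      pose proof M_ge1. pose proof (nrm_ge0 m' (green m v m')).
      apply half_le_of_ramp; try apply nrm_ge0. nra. }
    pose proof (pow_le (1/2) j ltac:(lra)). pose proof M_ge1. simpl.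
    replace (M * (1 / 2 * (1 / 2) ^ j) * nrm m v) with (M * (1/2) ^ j * (/ 2 * nrm m v)) by field.
    apply Rmult_le_compat_l; [nra | exact Hhalf].
Qed.

Lemma forward_decay n m x : (m <= n)%Z ->
  nrm n (Acal A n m (P m x)) <= 2 * M * M * powerRZ (rate L) (n - m) * nrm m x.
Proof.
  intros Hmn. pose proof L_pos. unfold Acal. set (k := Z.to_nat (n - m)).
  replace (powerRZ (rate L) (n - m)) with (rate L ^ k) by (rewrite pow_powerRZ; f_equal; lia).
  replace n with (m + Z.of_nat k)%Z at 1 by lia.
  eapply Rle_trans; [apply (forward_halving (k / L) m (P m x) (P_idem m x) k)|].
  { rewrite Nat.mul_comm. apply Nat.Div0.mul_div_le. }
  assert (Hk : (k <= S (k / L) * L)%nat).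
  { pose proof (Nat.div_mod k L ltac:(lia)). pose proof (Nat.mod_upper_bound k L ltac:(lia)).
    simpl. lia. }
  pose proof (half_pow_le_rate L ltac:(lia) _ _ Hk).
  pose proof (green_bound m x m) as HP. change (green m x m) with (P m x) in HP.
  pose proof (nrm_ge0 m (P m x)). pose proof M_ge1. pose proof (pow_le (1/2) (k / L) ltac:(lra)).
  assert (M * (1/2) ^ (k / L) <= M * (2 * rate L ^ k)) by (apply Rmult_le_compat_l; lra).
  assert (M * (1/2) ^ (k / L) * nrm m (P m x) <= M * (2 * rate L ^ k) * (M * nrm m x))
    by (apply Rmult_le_compat; nra).
  lra.
Qed.

Lemma backward_solution n m x y : (n < m)%Z -> P n y = zero ->
  Acal A m n y = sub x (P m x) -> y = opp (green m x n).
Proof.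
  intros Hnm Hy Hacal. unfold Acal in Hacal. set (k := Z.to_nat (m - n)) in Hacal.
  apply (evol_ker_inj n k); [exact Hy| |].
  - unfold P. rewrite green_lt by exact Hnm. unfold trunc_lt.
    destruct (Z_lt_dec n n); [lia | reflexivity].
  - rewrite Hacal, (linear_opp _ (evol_linear n k)).
    replace k with (S (k - 1)) by lia. cbn [evol].
    rewrite <- (evol_of_rec (green m x) n (k - 1)).
    + replace (n + Z.of_nat (k - 1))%Z with (m - 1)%Z by lia.
      rewrite green_jump, opp_sub. reflexivity.
    + intros i Hi. rewrite green_rec by lia. f_equal; [|f_equal]; lia.
Qed.

Lemma backward_decay n m x y : (n <= m)%Z -> P n y = zero ->
  Acal A m n y = sub x (P m x) ->
  nrm n y <= 2 * M * M * powerRZ (/ rate L) (n - m) * nrm m x.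
Proof.
  intros Hnm Hy Hacal. pose proof L_pos. pose proof M_ge1. pose proof (nrm_ge0 m x).
  destruct (Z.eq_dec n m) as [->|Hne].
  { unfold Acal in Hacal. rewrite Z.sub_diag in Hacal |- *. simpl in Hacal.
    rewrite Hacal, powerRZ_O.
    eapply Rle_trans; [apply norm_sub_le, nrm_is_norm|].
    pose proof (green_bound m x m) as HP. change (green m x m) with (P m x) in HP.
    assert (1 + M <= 2 * M * M) by nra. nra. }
  rewrite (backward_solution n m x y ltac:(lia) Hy Hacal), norm_opp by apply nrm_is_norm.
  set (k := Z.to_nat (m - n)).
  replace (powerRZ (/ rate L) (n - m)) with (rate L ^ k).
  2:{ rewrite powerRZ_inv'. replace (n - m)%Z with (- Z.of_nat k)%Z by lia.
      rewrite powerRZ_neg', <- pow_powerRZ, Rinv_inv. reflexivity. }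
  set (j := ((k - 1) / L)%nat).
  assert (Hj : (j * L <= k - 1)%nat) by (unfold j; rewrite Nat.mul_comm; apply Nat.Div0.mul_div_le).
  assert (Hk : (k <= S j * L)%nat).
  { pose proof (Nat.div_mod (k - 1) L ltac:(lia)).
    pose proof (Nat.mod_upper_bound (k - 1) L ltac:(lia)).
    unfold j. simpl. lia. }
  eapply Rle_trans; [apply (backward_halving j); rewrite Nat2Z.inj_mul; lia|].
  pose proof (half_pow_le_rate L ltac:(lia) _ _ Hk). pose proof (rate_bounds L ltac:(lia)).
  pose proof (pow_le (rate L) k ltac:(lra)).
  assert (M * (1/2) ^ j <= M * (2 * rate L ^ k)) by (apply Rmult_le_compat_l; lra).
  assert (M * (2 * rate L ^ k) <= M * (2 * rate L ^ k) * M)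
    by (rewrite <- (Rmult_1_r (M * (2 * rate L ^ k))) at 1; apply Rmult_le_compat_l; nra).
  apply Rmult_le_compat_r; [lra|]. nra.
Qed.

Lemma dichotomy_of_bounds : exp_dichotomy X A nrm.
Proof.
  pose proof (rate_bounds L L_pos) as [Hr1 Hr2]. pose proof M_ge1.
  exists P. split; [exact P_linear|]. split; [exact P_idem|]. split; [exact P_commute|].
  split; [intros m; split; [apply P_ker_inj | apply P_ker_surj]|].
  exists (2 * M * M), (rate L), (/ rate L).
  split; [nra|]. split; [lra|]. split; [lra|].
  split; [rewrite <- Rinv_1; apply Rinv_lt_contravar; lra|].
  split; [apply forward_decay | apply backward_decay].
Qed.

End Estimates.
End Setting.

Theorem theorem3p4 (X : NormedSpace) (nrm : Z -> X -> R) (A : Z -> X -> X)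
  (B : seqR -> Prop) (nB : seqR -> R) :
  complete X ->
  is_banach_seq_space B nB ->
  admissible B nB ->
  (forall m, is_norm_on X (nrm m) /\ equiv_norm X (nrm m)) ->
  (forall m, bounded_linear X (A m)) ->
  TB_bijective X A nrm B ->
  exp_dichotomy X A nrm.
Proof.
  intros HX HB Hadm Hn HA HT.
  destruct (chi_norm_ratio B nB Hadm) as [N [HN1 HN]].
  destruct (T_bounded_below X nrm A B nB HX HB Hadm Hn HA HT) as [K [HK1 HK]].
  destruct (INR_unbounded (4 * M N K)) as [L HL].
  apply (dichotomy_of_bounds X nrm A B nB HB Hadm Hn HA HT N K HN1 HN HK1 HK L). lra.
Qed.
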